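(* For each fixed $d\in\mathbb{N}$, collinearity of three $d$-dimensional points with $n$-bit natural-number coordinates can be maintained in $\mathrm{DynFO}{+}\mathrm{ar}$ under changes of single bits.
   Context: Input: three points $p_1,p_2,p_3\in\mathbb{N}^d$ whose coordinates are $n$-bit numbers, encoded over a domain $[n]$ by relations recording which bits of which coordinates are $1$; a change flips a single bit of a single coordinate. The Boolean query asks whether $p_1,p_2,p_3$ lie on a common line. $\mathrm{FO}{+}\mathrm{ar}$: first-order logic with access to a linear order and compatible addition and multiplication on the domain, order-invariant. A query is in $\mathrm{DynFO}{+}\mathrm{ar}$ under a set of changes if there is a dynamic program, with auxiliary relations over the fixed domain and one $\mathrm{FO}{+}\mathrm{ar}$ update formula per change operation and auxiliary relation (evaluated on the old input and auxiliary structure, with the change parameters as free variables), which, starting from the empty input (all bits $0$) with empty auxiliary relations, has after every sequence of changes a query relation equal to the query answer on the current input. *)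

From mathcomp Require Import all_boot all_order all_algebra.
Import GRing.Theory Num.Theory.

(* First-order logic with built-in arithmetic FO+ar over the domain    *)
(* [n] = {0,...,n-1}: equality, the natural linear order <, and the    *)
(* (partial, i.e. restricted to the domain) addition and               *)
(* multiplication relations x + y = z, x * y = z.                      *)
(* Variables are de Bruijn indices; FEx binds variable 0.              *)
Inductive fo (S : Type) : Type :=
| FTrue
| FEq  of nat & nat
| FLt  of nat & nat
| FAdd of nat & nat & nat
| FMul of nat & nat & nat
| FRel of S & seq nat
| FNot of fo S
| FAnd of fo S & fo S
| FEx  of fo S.

Arguments FTrue {S}.
Arguments FRel {S}.
Arguments FNot {S}.
Arguments FAnd {S}.
Arguments FEx {S}.
Arguments FEq {S}.
Arguments FLt {S}.
Arguments FAdd {S}.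
Arguments FMul {S}.

Fixpoint holds (S : Type) (n : nat) (I : S -> seq nat -> bool)
    (env : nat -> nat) (f : fo S) : bool :=
  match f with
  | FTrue => true
  | FEq x y => env x == env y
  | FLt x y => env x < env y
  | FAdd x y z => env x + env y == env z
  | FMul x y z => env x * env y == env z
  | FRel s xs => I s (map env xs)
  | FNot g => ~~ holds S n I env g
  | FAnd g h => holds S n I env g && holds S n I env h
  | FEx g => [exists i : 'I_n,
               holds S n I (fun v => if v is v'.+1 then env v' else nat_of_ord i) g]
  end.

(* Input: three points in N^d; for point i : 'I_3 and coordinate       *)
(* j : 'I_d, a unary relation (over [n]) of the positions of the 1-bits *)
(* of that n-bit coordinate.                                            *)
Definition input (d : nat) := 'I_3 -> 'I_d -> nat -> bool.

Definition coord (d n : nat) (inp : input d) (i : 'I_3) (j : 'I_d) : nat :=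
  \sum_(k < n) (inp i j k) * 2 ^ k.

Definition change (d : nat) := ('I_3 * 'I_d * nat)%type.

Definition flip (d : nat) (c : change d) (inp : input d) : input d :=
  fun i j k =>
    if (i == c.1.1) && (j == c.1.2) && (k == c.2) then ~~ inp i j k
    else inp i j k.

Definition collinear (d : nat) (p : 'I_3 -> 'I_d -> rat) : Prop :=
  exists (a v : 'I_d -> rat),
    (exists j, v j != 0)%R /\
    forall i : 'I_3, exists t : rat, forall j : 'I_d, (p i j = a j + t * v j)%R.

Definition points (d n : nat) (inp : input d) : 'I_3 -> 'I_d -> rat :=
  fun i j => ((coord d n inp i j)%:R)%R.

(* Dynamic programs. Symbols available to update formulas: the 3d input *)
(* relations (inl (i,j)) and the K auxiliary relations (inr r).         *)
(* For each change operation "flip a bit of coordinate j of point i"   *)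
(* and each auxiliary relation r of arity ar r, an update formula whose *)
(* free variable 0 is the change parameter (the bit position) and whose *)
(* free variables 1..ar r are the tuple components.  The query relation *)
Record dynprog (d : nat) : Type := DynProg {
  dp_K   : nat;
  dp_ar  : 'I_dp_K -> nat;
  dp_q   : 'I_dp_K;
  dp_q0  : dp_ar dp_q = 0;
  dp_upd : 'I_3 -> 'I_d -> 'I_dp_K -> fo (('I_3 * 'I_d) + 'I_dp_K)
}.

Record state (d K : nat) : Type := State {
  st_inp : input d;
  st_aux : 'I_K -> seq nat -> bool
}.

Definition interp (d K : nat) (st : state d K) :
    ('I_3 * 'I_d) + 'I_K -> seq nat -> bool :=
  fun s xs =>
    match s with
    | inl ij => if xs is [:: a] then st_inp d K st ij.1 ij.2 a else false
    | inr r => st_aux d K st r xs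
    end.

Definition init_state (d K : nat) : state d K :=
  State d K (fun _ _ _ => false) (fun _ _ => false).

(* one step: update formulas are evaluated on the OLD input and auxiliary *)
(* structure; the new relations consist of the tuples over [n] of the    *)
(* right arity satisfying the update formula.                            *)
Definition step (d : nat) (P : dynprog d) (n : nat)
    (st : state d (dp_K d P)) (c : change d) : state d (dp_K d P) :=
  State d (dp_K d P) (flip d c (st_inp d (dp_K d P) st))
        (fun r t => [&& size t == @dp_ar d P r, all (fun a => a < n) t &
                     holds _ n (interp d (dp_K d P) st) (fun v => nth 0 (c.2 :: t) v)
                           (@dp_upd d P c.1.1 c.1.2 r)]).

Definition run (d : nat) (P : dynprog d) (n : nat) (cs : seq (change d)) :
    state d (dp_K d P) :=
  foldl (step d P n) (init_state d (dp_K d P)) cs.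

Definition query_answer (d : nat) (P : dynprog d) (st : state d (dp_K d P)) : bool :=
  st_aux d (dp_K d P) st (dp_q d P) [::].

Definition maintains_collinearity (d : nat) (P : dynprog d) : Prop :=
  forall (n : nat) (cs : seq (change d)),
    cs != [::] ->
    all (fun c : change d => c.2 < n) cs ->
    query_answer d P (run d P n cs) <->
    collinear d (points d n (st_inp d (dp_K d P) (run d P n cs))).

From Pilot Require Import Defs.
From mathcomp Require Import all_boot all_order all_algebra.
From mathcomp Require Import zify ring.

(* The program maintains, for all coordinates [j <> l], the binary expansions
   of both sides of the cross-product equation
   [(p1j - p0j)(p2l - p0l) = (p1l - p0l)(p2j - p0j)], rearranged so that each
   side is a sum of three products of distinct input coordinates; these are
   numbers of [3n] bits, stored in three unary relations over [[n]].  The points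
   are collinear iff [d > 0] and the two sides agree for all [j], [l].  Flipping
   bit [k] of a coordinate [x] changes a side containing [x] by [2^k] times the
   coordinate multiplied with [x], so the new bits are those of one sum or
   difference with a shifted input number, which is first-order definable from
   the order and addition by carry look-ahead. *)

Import GRing.Theory Num.Theory.

Definition bitn (N i : nat) : bool := odd (N %/ 2 ^ i).

Definition carryn (X Y i : nat) : bool := 2 ^ i <= X %% 2 ^ i + Y %% 2 ^ i.

Lemma bitn_small N i : N < 2 ^ i -> bitn N i = false.
Proof. by move=> ltNi; rewrite /bitn divn_small. Qed.

Lemma bitn0 i : bitn 0 i = false.
Proof. by rewrite /bitn div0n. Qed.

Lemma bitnD X Y i : bitn (X + Y) i = bitn X i (+) bitn Y i (+) carryn X Y i.
Proof. by rewrite /bitn /carryn divnD ?expn_gt0 // !oddD oddb. Qed.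

Lemma bitnDMX k X Y i : X < 2 ^ k ->
  bitn (X + Y * 2 ^ k) i = if i < k then bitn X i else bitn Y (i - k).
Proof.
move=> ltXk; rewrite /bitn; case: ltnP => [ltik|leki].
  rewrite -(subnKC (ltnW ltik)) expnD (mulnC (2 ^ i)) mulnA divnDMl ?expn_gt0 //.
  by rewrite oddD oddM oddX subn_eq0 leqNgt ltik /= andbF addbF.
by rewrite -{1}(subnKC leki) expnD divnMA divnDMl ?expn_gt0 // (divn_small ltXk).
Qed.

Lemma modn_exp2S X i : X %% 2 ^ i.+1 = bitn X i * 2 ^ i + X %% 2 ^ i.
Proof.
have pos2i : 0 < 2 ^ i by rewrite expn_gt0.
rewrite /bitn {1}(divn_eq X (2 ^ i)) {1}(divn_eq (X %/ 2 ^ i) 2) -modn2.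
have -> : ((X %/ 2 ^ i) %/ 2 * 2 + (X %/ 2 ^ i) %% 2) * 2 ^ i + X %% 2 ^ i
  = (X %/ 2 ^ i) %/ 2 * 2 ^ i.+1 + ((X %/ 2 ^ i) %% 2 * 2 ^ i + X %% 2 ^ i)
  by rewrite expnS; ring.
rewrite modnMDl modn_small //.
have := ltn_pmod X pos2i; have : (X %/ 2 ^ i) %% 2 < 2 by rewrite ltn_pmod.
rewrite expnS; case: (_ %% 2) => [|[|]] //= _; lia.
Qed.

Lemma carrynS X Y i : carryn X Y i.+1 = (2 <= bitn X i + bitn Y i + carryn X Y i).
Proof.
have pos2i : 0 < 2 ^ i by rewrite expn_gt0.
have := ltn_pmod X pos2i; have := ltn_pmod Y pos2i.
rewrite /carryn !modn_exp2S expnS.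
by case: (bitn X i); case: (bitn Y i); case: leqP => /=; lia.
Qed.

Lemma carrynP X Y i : carryn X Y i <-> exists q, [/\ q < i, bitn X q, bitn Y q &
  forall r, q < r < i -> bitn X r || bitn Y r].
Proof.
elim: i => [|i IH].
  by rewrite /carryn expn0 !modn1; split => // -[q []].
rewrite carrynS; split.
- case bX: (bitn X i); case bY: (bitn Y i) => /=.
  + by move=> _; exists i; split => // r; lia.
  + case c: (carryn X Y i) => // _; have [q [ltqi bXq bYq prop]] := proj1 IH c.
    exists q; split => // [|r /andP[ltqr]]; first lia.
    by rewrite ltnS leq_eqVlt => /predU1P[->|ltri]; rewrite ?bX // prop ?ltqr.
  + case c: (carryn X Y i) => // _; have [q [ltqi bXq bYq prop]] := proj1 IH c.
    exists q; split => // [|r /andP[ltqr]]; first lia.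
    by rewrite ltnS leq_eqVlt => /predU1P[->|ltri]; rewrite ?bY ?orbT // prop ?ltqr.
  + by case: (carryn X Y i).
- move=> [q [ltqi bXq bYq prop]].
  have [eqqi|neqi] := eqVneq q i; first by rewrite -eqqi bXq bYq.
  have c : carryn X Y i.
    apply/IH; exists q; split => [|||r /andP[ltqr ltri]] //; first lia.
    by apply: prop; rewrite ltqr ltnW.
  have := prop i; rewrite c ltnSn andbT.
  case: (bitn X i); case: (bitn Y i) => //=; apply; lia.
Qed.

Lemma bitn_complement M Z i : Z < 2 ^ M -> i < M ->
  bitn (2 ^ M - 1 - Z) i = ~~ bitn Z i.
Proof.
move=> ltZM ltiM; rewrite /bitn.
have pos2i : 0 < 2 ^ i by rewrite expn_gt0.
have splitM : 2 ^ M = 2 ^ (M - i) * 2 ^ i by rewrite -expnD subnK // ltnW.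
have ltq : Z %/ 2 ^ i < 2 ^ (M - i) by rewrite ltn_divLR // -splitM.
have ltr := ltn_pmod Z pos2i.
have -> : 2 ^ M - 1 - Z = (2 ^ (M - i) - 1 - Z %/ 2 ^ i) * 2 ^ i + (2 ^ i - 1 - Z %% 2 ^ i).
  by rewrite {1}splitM {1}(divn_eq Z (2 ^ i)) !mulnBl mul1n; nia.
rewrite divnMDl // (divn_small (_ : 2 ^ i - 1 - Z %% 2 ^ i < 2 ^ i)); last lia.
rewrite addn0 -subnDA oddB; last lia.
by rewrite oddX /= (_ : (M - i == 0) = false) //; lia.
Qed.

Lemma bitn_inj M X Y : X < 2 ^ M -> Y < 2 ^ M ->
  (forall i, i < M -> bitn X i = bitn Y i) -> X = Y.
Proof.
elim: M X Y => [|M IH] X Y ltXM ltYM eqbits.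
  by rewrite expn0 in ltXM ltYM; lia.
have eq0 := eqbits 0 (ltn0Sn _); rewrite /bitn !expn0 !divn1 in eq0.
have eqhalf : X./2 = Y./2.
  apply: IH => [||i ltiM]; rewrite -!divn2 ?ltn_divLR -?expnSr //.
  by have := eqbits i.+1 ltiM; rewrite /bitn expnS !divnMA.
by rewrite -(odd_double_half X) -(odd_double_half Y) eq0 eqhalf.
Qed.

Lemma sum_bits_lt (b : nat -> bool) n : \sum_(k < n) b k * 2 ^ k < 2 ^ n.
Proof.
elim: n => [|n IH]; first by rewrite big_ord0.
rewrite big_ord_recr /= expnS mul2n -addnn -addSn leq_add //.
by case: (b n); rewrite ?mul1n ?mul0n.
Qed.

Lemma bitn_sum_bits (b : nat -> bool) n i :
  bitn (\sum_(k < n) b k * 2 ^ k) i = (i < n) && b i.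
Proof.
elim: n => [|n IH]; first by rewrite big_ord0 bitn0.
rewrite big_ord_recr /= bitnDMX ?sum_bits_lt // IH ltnS.
case: ltngtP => [//|ltni|->]; last by rewrite subnn /bitn divn1 oddb.
apply: bitn_small; rewrite (leq_ltn_trans (leq_b1 _)) //.
by rewrite -{1}(expn0 2) ltn_exp2l // subn_gt0.
Qed.

Definition FFalse {S : Type} : fo S := FNot FTrue.
Fact FOr_key : unit. Proof. by []. Qed.
Definition FOr {S : Type} (f g : fo S) : fo S :=
  locked_with FOr_key (FNot (FAnd (FNot f) (FNot g))).
Definition FXor {S : Type} (f g : fo S) : fo S := FOr (FAnd f (FNot g)) (FAnd (FNot f) g).
Definition FIff {S : Type} (f g : fo S) : fo S := FNot (FXor f g).
Definition FIf {S : Type} (f g h : fo S) : fo S := FOr (FAnd f g) (FAnd (FNot f) h).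
Fact FAll_key : unit. Proof. by []. Qed.
Definition FAll {S : Type} (f : fo S) : fo S := locked_with FAll_key (FNot (FEx (FNot f))).

Fixpoint FOrL {S T : Type} (s : seq T) (f : T -> fo S) : fo S :=
  if s is x :: s' then FOr (f x) (FOrL s' f) else FFalse.
Fixpoint FAndL {S T : Type} (s : seq T) (f : T -> fo S) : fo S :=
  if s is x :: s' then FAnd (f x) (FAndL s' f) else FTrue.

Section DerivedConnectives.
Variables (S : Type) (n : nat) (I : S -> seq nat -> bool).
Local Notation sat := (holds S n I).

Definition env_cons (w : nat) (env : nat -> nat) : nat -> nat :=
  fun v => if v is v'.+1 then env v' else w.

Lemma holds_ex env f : sat env (FEx f) = [exists i : 'I_n, sat (env_cons i env) f].
Proof. by []. Qed.

Lemma holds_exP env f :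
  reflect (exists i : 'I_n, sat (env_cons i env) f) (sat env (FEx f)).
Proof. exact: existsP. Qed.

Lemma holds_or env f g : sat env (FOr f g) = sat env f || sat env g.
Proof. by rewrite /FOr locked_withE /= negb_and !negbK. Qed.

Lemma holds_xor env f g : sat env (FXor f g) = sat env f (+) sat env g.
Proof. by rewrite /FXor holds_or /=; case: (sat env f); case: (sat env g). Qed.

Lemma holds_iff env f g : sat env (FIff f g) = (sat env f == sat env g).
Proof. by rewrite /FIff /= holds_xor; case: (sat env f); case: (sat env g). Qed.

Lemma holds_if env f g h :
  sat env (FIf f g h) = if sat env f then sat env g else sat env h.
Proof. by rewrite /FIf holds_or /=; case: (sat env f); rewrite ?orbF. Qed.

Lemma holds_all env f : sat env (FAll f) = [forall i : 'I_n, sat (env_cons i env) f].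
Proof.
by rewrite /FAll locked_withE /= negb_exists; apply: eq_forallb => i; rewrite negbK.
Qed.

Lemma holds_OrL T env (s : seq T) f : sat env (FOrL s f) = has (fun x => sat env (f x)) s.
Proof. by elim: s => //= x s IH; rewrite holds_or IH. Qed.

Lemma holds_AndL T env (s : seq T) f : sat env (FAndL s f) = all (fun x => sat env (f x)) s.
Proof. by elim: s => //= x s IH; rewrite IH. Qed.

Lemma holds_OrL_enum (T : finType) env (f : T -> fo S) :
  sat env (FOrL (enum T) f) = [exists x, sat env (f x)].
Proof.
by rewrite holds_OrL; apply/hasP/existsP => [[x _]|[x]]; exists x; rewrite ?mem_enum.
Qed.

Lemma holds_AndL_enum (T : finType) env (f : T -> fo S) :
  sat env (FAndL (enum T) f) = [forall x, sat env (f x)].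
Proof. by rewrite holds_AndL; apply/allP/forallP => [h x|h x _]; rewrite ?h ?mem_enum. Qed.

End DerivedConnectives.

Section BlockPositions.
Variables (S : Type) (n m : nat) (I : S -> seq nat -> bool).
Local Notation sat := (holds S n I).

Definition FPosLt (h1 : 'I_m) v1 (h2 : 'I_m) v2 : fo S :=
  if h1 < h2 then FTrue else if h1 == h2 then FLt v1 v2 else FFalse.

Lemma holds_PosLt env (h1 h2 : 'I_m) v1 v2 : env v1 < n -> env v2 < n ->
  sat env (FPosLt h1 v1 h2 v2) = (h1 * n + env v1 < h2 * n + env v2).
Proof.
move=> ltv1 ltv2; rewrite /FPosLt -val_eqE /=; case: ltngtP => [lth|lth|->] /=.
- have : h1.+1 * n <= h2 * n by rewrite leq_mul2r lth orbT.
  by rewrite mulSn; lia.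
- have : h2.+1 * n <= h1 * n by rewrite leq_mul2r lth orbT.
  by rewrite mulSn; lia.
by rewrite ltn_add2l.
Qed.

Lemma block_pos_lt (h : 'I_m) p : p < n -> h * n + p < m * n.
Proof.
move=> ltpn; have : h.+1 * n <= m * n by rewrite leq_mul2r ltn_ord orbT.
by rewrite mulSn; lia.
Qed.

Lemma block_posP P : P < m * n -> exists (h : 'I_m) (p : 'I_n), P = h * n + p.
Proof.
move=> ltP; have n_gt0 : 0 < n by lia.
have lth : P %/ n < m by rewrite ltn_divLR.
by exists (Ordinal lth), (Ordinal (ltn_pmod P n_gt0)); rewrite /= -divn_eq.
Qed.

End BlockPositions.

Arguments block_pos_lt {n m} h {p}.
Arguments block_posP {n m P}.

Section BinaryArithmetic.
Variables (S : Type) (n m k0 : nat) (I : S -> seq nat -> bool).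
Local Notation sat := (holds S n I).
Local Notation FPosLt := (@FPosLt S m).

(* [X h v s] speaks about bit [h * n + v] of a number of [m * n] bits; the
   variable [s] carries a parameter, whose value is [k0]. *)
Definition bits_fo := 'I_m -> nat -> nat -> fo S.

Definition defines (X : bits_fo) (N : nat) := forall (h : 'I_m) v s env,
  env s = k0 -> env v < n -> sat env (X h v s) = bitn N (h * n + env v).

Definition FExBlock (f : 'I_m -> fo S) : fo S := FOrL (enum 'I_m) f.

Definition FCarry (X Y : bits_fo) (h : 'I_m) v s : fo S :=
  FExBlock (fun h1 => FEx (FAnd (FPosLt h1 0 h v.+1) (FAnd (X h1 0 s.+1) (FAnd (Y h1 0 s.+1)
    (FNot (FExBlock (fun h2 => FEx (FAnd (FPosLt h1 1 h2 0) (FAnd (FPosLt h2 0 h v.+2)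
      (FNot (FOr (X h2 0 s.+2) (Y h2 0 s.+2)))))))))))).

Lemma holds_carry {X Y A B} (h : 'I_m) v s env :
  defines X A -> defines Y B -> env s = k0 -> env v < n ->
  sat env (FCarry X Y h v s) = carryn A B (h * n + env v).
Proof.
move=> defX defY es ltv; have ltP := block_pos_lt h ltv.
apply/idP/idP.
- rewrite /FCarry holds_OrL_enum => /existsP[h1] /holds_exP[p] /= /and4P[ltq bA bB noprop].
  rewrite holds_PosLt //= in ltq; rewrite defX //= in bA; rewrite defY //= in bB.
  apply/carrynP; exists (h1 * n + p); split => // r /andP[ltqr ltr].
  have [h2 [p2 er]] := block_posP (ltn_trans ltr ltP); subst r.
  move: noprop; apply: contraNT => prop; rewrite holds_OrL_enum.
  apply/existsP; exists h2; apply/holds_exP; exists p2.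
  by rewrite /= !holds_PosLt //= holds_or defX //= defY //= ltqr ltr.
- move/carrynP => [q [ltq bA bB prop]].
  have [h1 [p eq]] := block_posP (ltn_trans ltq ltP); subst q.
  rewrite /FCarry holds_OrL_enum; apply/existsP; exists h1; apply/holds_exP; exists p.
  rewrite /= holds_PosLt //= defX //= defY //= ltq bA bB /= holds_OrL_enum.
  apply/existsP => -[h2] /holds_exP[p2].
  rewrite /= !holds_PosLt //= holds_or defX //= defY //=.
  by case/and3P => ltqr ltr; rewrite prop ?ltqr.
Qed.

Definition FSum (X Y : bits_fo) : bits_fo := fun h v s =>
  FXor (FXor (X h v s) (Y h v s)) (FCarry X Y h v s).

Lemma defines_sum {X Y A B} : defines X A -> defines Y B -> defines (FSum X Y) (A + B).
Proof.
move=> defX defY h v s env es ltv.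
by rewrite /FSum !holds_xor defX // defY // (holds_carry _ _ _ _ defX defY) // bitnD.
Qed.

Definition FCompl (X : bits_fo) : bits_fo := fun h v s => FNot (X h v s).

Lemma defines_compl {X A} : A < 2 ^ (m * n) -> defines X A ->
  defines (FCompl X) (2 ^ (m * n) - 1 - A).
Proof.
move=> ltA defX h v s env es ltv.
by rewrite /FCompl /= defX // bitn_complement // block_pos_lt.
Qed.

(* [A - B = ~(~A + B)] in [m * n]-bit arithmetic. *)
Definition FSub (X Y : bits_fo) : bits_fo := FCompl (FSum (FCompl X) Y).

Lemma defines_sub {X Y A B} : A < 2 ^ (m * n) -> B <= A ->
  defines X A -> defines Y B -> defines (FSub X Y) (A - B).
Proof.
move=> ltA leBA defX defY.
have := defines_compl _ (defines_sum (defines_compl ltA defX) defY).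
have -> : 2 ^ (m * n) - 1 - (2 ^ (m * n) - 1 - A + B) = A - B by lia.
by apply; lia.
Qed.

Definition FMax x : fo S := FNot (FEx (FLt x.+1 0)).
Definition FSucc x y : fo S := FAnd (FLt x y) (FNot (FEx (FAnd (FLt x.+1 0) (FLt 0 y.+1)))).

Fact FAddN_key : unit. Proof. by []. Qed.
(* [i + k = n + p], witnessed by [e = n - 1], [a' + k = e], [a = a' + 1], [p + a = i]. *)
Definition FAddN i k p : fo S := locked_with FAddN_key
  (FEx (FEx (FEx (FAnd (FAdd p.+3 2 i.+3)
    (FAnd (FAdd 1 k.+3 0) (FAnd (FMax 0) (FSucc 1 2))))))).

Lemma holds_AddN env i k p : env i < n -> env k < n -> env p < n ->
  sat env (FAddN i k p) = (env i + env k == n + env p).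
Proof.
move=> lti ltk ltp; rewrite /FAddN locked_withE; apply/idP/eqP.
- case/existsP => a /existsP[a' /existsP[e]] /=.
  case/and5P => /eqP addpa /eqP adda'k emax lta'a succa'a.
  have ee : e = n.-1 :> nat.
    apply/eqP; rewrite eqn_leq -ltnS (_ : (n.-1).+1 = n); last lia.
    rewrite ltn_ord /=; apply: contraNT emax; rewrite -ltnNge => lten.
    have ltn1 : n.-1 < n by lia.
    by apply/existsP; exists (Ordinal ltn1).
  have ea : (a : nat) = a'.+1.
    apply/eqP; rewrite eqn_leq lta'a andbT; apply: contraNT succa'a; rewrite -ltnNge => lta.
    by apply/existsP; exists (Ordinal (ltn_trans lta (ltn_ord a))); rewrite /= ltnSn.
  lia.
- move=> eqik.
  have lt1 : env i - env p < n by lia.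
  have lt2 : env i - env p - 1 < n by lia.
  have lt3 : n - 1 < n by lia.
  apply/existsP; exists (Ordinal lt1); apply/existsP; exists (Ordinal lt2).
  apply/existsP; exists (Ordinal lt3) => /=.
  apply/and5P; split; try (apply/eqP; rewrite /=; lia);
    apply/negP => /existsP[z]; have := ltn_ord z; rewrite /=; lia.
Qed.

Definition FAddBlock (h : 'I_m) i k p : fo S :=
  if val h == 0 then FAdd i k p else if val h == 1 then FAddN i k p else FFalse.

Lemma holds_AddBlock env (h : 'I_m) i k p : env i < n -> env k < n -> env p < n ->
  sat env (FAddBlock h i k p) = (env i + env k == h * n + env p).
Proof.
move=> lti ltk ltp; rewrite /FAddBlock.
case: h => [[|[|h]] lth] /=; rewrite ?mul1n ?holds_AddN //.
by apply/esym/eqP; nia.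
Qed.

Definition FShift (y : S) : bits_fo := fun h v s =>
  FEx (FAnd (FRel y [:: 0]) (FAddBlock h 0 s.+1 v.+1)).

Lemma defines_shift y Y : k0 < n -> Y < 2 ^ n ->
  (forall a, a < n -> I y [:: a] = bitn Y a) -> defines (FShift y) (Y * 2 ^ k0).
Proof.
move=> ltk ltY bitsY h v s env es ltv.
rewrite -[Y * _]add0n bitnDMX ?expn_gt0 // /FShift holds_ex.
apply/existsP/idP.
- case=> a /=; rewrite bitsY // holds_AddBlock //= es ?ltk // => /andP[bYa /eqP eqa].
  by rewrite -eqa ltnNge leq_addl /= addnK.
- case: ltnP => [_|lekP]; first by rewrite bitn0.
  move=> bY; have lta : h * n + env v - k0 < n.
    rewrite ltnNge; apply: contraTN bY => leq; rewrite bitn_small //.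
    exact: leq_trans ltY (leq_pexp2l _ leq).
  exists (Ordinal lta) => /=; rewrite bitsY // bY holds_AddBlock //= es ?ltk //.
  by rewrite subnK.
Qed.

End BinaryArithmetic.

Arguments FCompl {S m}.
Arguments FSum {S m}.
Arguments FSub {S m}.
Arguments FShift {S m}.
Arguments defines_sum {S n m k0 I X Y A B}.
Arguments defines_sub {S n m k0 I X Y A B}.

Definition i0 : 'I_3 := @Ordinal 3 0 isT.
Definition i1 : 'I_3 := @Ordinal 3 1 isT.
Definition i2 : 'I_3 := @Ordinal 3 2 isT.

Lemma I3_ind (P : 'I_3 -> Prop) : P i0 -> P i1 -> P i2 -> forall i, P i.
Proof. by move=> P0 P1 P2 [[|[|[|i]]] lti] //; rewrite (bool_irrelevance lti isT). Qed.

Definition cross_term {d : nat} (p : 'I_3 -> 'I_d -> rat) (j l : 'I_d) : rat :=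
  ((p i1 j - p i0 j) * (p i2 l - p i0 l))%R.

Section Collinearity.
Local Open Scope ring_scope.
Variables (d : nat) (p : 'I_3 -> 'I_d -> rat).

Lemma collinear_multiples (v : 'I_d -> rat) s t : (exists j, v j != 0) ->
  (forall j, p i1 j - p i0 j = s * v j) -> (forall j, p i2 j - p i0 j = t * v j) ->
  collinear d p.
Proof.
move=> nz_v eq_s eq_t; exists (p i0), v; split => //.
by apply: I3_ind; [exists 0|exists s|exists t] => j;
  rewrite ?mul0r ?addr0 // -?eq_s -?eq_t addrC subrK.
Qed.

Lemma collinear_cross :
  collinear d p <-> (0 < d)%N /\ forall j l, cross_term p j l = cross_term p l j.
Proof.
split.
  move=> [a [v [[j0 vj0] onv]]]; split; first exact: leq_ltn_trans (ltn_ord j0).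
  have [t0 E0] := onv i0; have [t1 E1] := onv i1; have [t2 E2] := onv i2.
  by move=> j l; rewrite /cross_term !E0 !E1 !E2; ring.
move=> [d_gt0 cross].
have [j0 /= neq1|eq1] := pickP [pred j | p i1 j - p i0 j != 0].
  apply: (@collinear_multiples (fun j => p i1 j - p i0 j) 1
            ((p i2 j0 - p i0 j0) / (p i1 j0 - p i0 j0))) => [|j|j].
  - by exists j0.
  - by rewrite mul1r.
  - apply: (mulfI neq1); have := cross j0 j; rewrite /cross_term => ->; field.
    exact: neq1.
have {}eq1 j : p i1 j - p i0 j = 0 by apply/eqP/negbFE/eq1.
have [j0 /= neq2|eq2] := pickP [pred j | p i2 j - p i0 j != 0].
  by apply: (@collinear_multiples (fun j => p i2 j - p i0 j) 0 1) => [|j|j];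
    rewrite ?mul0r ?mul1r //; exists j0.
apply: (@collinear_multiples (fun=> 1) 0 0) => [|j|j]; rewrite ?mul0r //.
  by exists (Ordinal d_gt0); rewrite oner_eq0.
exact/eqP/negbFE/eq2.
Qed.

End Collinearity.

Section Program.
Variable d : nat.

Definition cvar := ('I_3 * 'I_d)%type.

(* Expanding [(p1j - p0j)(p2l - p0l) = (p1l - p0l)(p2j - p0j)], cancelling
   [p0j p0l] and moving the negative terms across yields an equation between
   two sums of three products, with no subtraction left. *)
Definition cross_side (j l : 'I_d) (b : bool) : seq (cvar * cvar) :=
  if b then [:: ((i1, j), (i2, l)); ((i1, l), (i0, j)); ((i0, l), (i2, j))]
  else [:: ((i1, l), (i2, j)); ((i1, j), (i0, l)); ((i0, j), (i2, l))].

Fixpoint partner (x : cvar) (ts : seq (cvar * cvar)) : option cvar :=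
  if ts is t :: ts' then
    if t.1 == x then Some t.2 else if t.2 == x then Some t.1 else partner x ts'
  else None.

(* [Some (j, l, b, h)] is the unary relation holding block [h] of the bits of
   side [b] of the cross-product equation for coordinates [j], [l];
   [None] is the query. *)
Definition rel_index := option ('I_d * 'I_d * bool * 'I_3).
Definition K := #|{: rel_index}|.
Definition rid (r : rel_index) : 'I_K := enum_rank r.
Definition symbol := (('I_3 * 'I_d) + 'I_K)%type.

Definition FStored j l b : bits_fo symbol 3 := fun h v _ =>
  FRel (inr (rid (Some (j, l, b, h)))) [:: v].

(* Flipping bit [s] of [x] changes a side by [2 ^ s] times the partner of [x]:
   downwards if the bit was set, upwards otherwise. *)
Definition FNewSide (x : cvar) j l b : bits_fo symbol 3 :=
  match partner x (cross_side j l b) with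
  | None => FStored j l b
  | Some y => fun h v s =>
     FIf (FRel (inl x) [:: s]) (FSub (FStored j l b) (FShift (inl y)) h v s)
                               (FSum (FStored j l b) (FShift (inl y)) h v s)
  end.

Definition FSidesEq (x : cvar) j l : fo symbol :=
  FAll (FAndL (enum 'I_3) (fun h =>
    FIff (FNewSide x j l true h 0 1) (FNewSide x j l false h 0 1))).

Definition FQuery (x : cvar) : fo symbol :=
  if d == 0 then FFalse else
  FAndL (enum {: 'I_d * 'I_d}) (fun jl =>
    if jl.1 == jl.2 then FTrue else FSidesEq x jl.1 jl.2).

Definition arity (r : 'I_K) : nat := if enum_val r is Some _ then 1 else 0.

Lemma arity_query : arity (rid None) = 0.
Proof. by rewrite /arity enum_rankK. Qed.

Definition update (i : 'I_3) (j : 'I_d) (r : 'I_K) : fo symbol :=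
  match enum_val r with
  | None => FQuery (i, j)
  | Some (j', l, b, h) => FNewSide (i, j) j' l b h 1 0
  end.

Definition collinearity_program : dynprog d :=
  DynProg d K arity (rid None) arity_query update.

End Program.

Section Correctness.
Variables (d n : nat).

Definition cvalue (inp : input d) (x : cvar d) : nat := Defs.coord d n inp x.1 x.2.

Definition side_value (inp : input d) (ts : seq (cvar d * cvar d)) : nat :=
  \sum_(t <- ts) cvalue inp t.1 * cvalue inp t.2.

Definition side_vars (ts : seq (cvar d * cvar d)) : seq (cvar d) :=
  flatten [seq [:: t.1; t.2] | t <- ts].

Lemma cvalue_lt inp x : cvalue inp x < 2 ^ n.
Proof. exact: sum_bits_lt. Qed.

Lemma bitn_cvalue inp x a : a < n -> bitn (cvalue inp x) a = inp x.1 x.2 a.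
Proof. by move=> lta; rewrite /cvalue /Defs.coord bitn_sum_bits lta. Qed.

Section Flip.
Variables (c : change d) (inp : input d).
Hypothesis ltk : c.2 < n.
Let x : cvar d := (c.1.1, c.1.2).
Let k := c.2.
Let B := inp x.1 x.2 k.
Let inp' := flip d c inp.

Lemma cvalue_flip_ne y : y != x -> cvalue inp' y = cvalue inp y.
Proof.
case: y => i j neq; apply: eq_bigr => a _; rewrite /inp' /flip /=.
by case: ifP => // /andP[/andP[/eqP ei /eqP ej] _]; case/eqP: neq; rewrite ei ej.
Qed.

Lemma cvalue_flip : cvalue inp' x + B * 2 ^ k = cvalue inp x + ~~ B * 2 ^ k.
Proof.
rewrite /cvalue /Defs.coord /= (bigD1 (Ordinal ltk)) //= [in RHS](bigD1 (Ordinal ltk)) //=.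
rewrite /inp' /flip /= !eqxx /=.
rewrite [X in _ + X + _ = _](eq_bigr (fun a : 'I_n => inp c.1.1 c.1.2 a * 2 ^ a)); last first.
  move=> a neqa; suff -> : (nat_of_ord a == c.2) = false by [].
  by apply: contraNF neqa => /eqP eqa; apply/eqP/val_inj.
by rewrite /B /k; case: (inp _ _ _); lia.
Qed.

Lemma side_value_notin ts : x \notin side_vars ts -> side_value inp' ts = side_value inp ts.
Proof.
elim: ts => [|[a b] ts IH]; first by rewrite /side_value !big_nil.
rewrite /side_vars /= !inE negb_or => /andP[xa /norP[xb xts]].
rewrite /side_value !big_cons /= -!/(side_value _ ts) IH //.
by rewrite !cvalue_flip_ne // eq_sym.
Qed.

Lemma side_value_flip ts : uniq (side_vars ts) ->
  match partner d x ts with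
  | Some y => side_value inp' ts + B * (cvalue inp y * 2 ^ k)
              = side_value inp ts + ~~ B * (cvalue inp y * 2 ^ k)
  | None => side_value inp' ts = side_value inp ts
  end.
Proof.
elim: ts => [|[a b] ts IH]; first by rewrite /side_value !big_nil.
rewrite /side_vars /= -/(side_vars ts) !inE negb_or.
move=> /andP[/andP[neab ats] /andP[bts uts]].
rewrite /side_value !big_cons /= -!/(side_value _ ts).
have := cvalue_flip; case: (eqVneq a x) => [eax|neax].
  have [xts nebx] : x \notin side_vars ts /\ b != x by rewrite -eax eq_sym.
  rewrite side_value_notin // (cvalue_flip_ne b) // -eax.
  by case: B => /=; nia.
case: (eqVneq b x) => [ebx|nebx].
  have xts : x \notin side_vars ts by rewrite -ebx.
  rewrite side_value_notin // (cvalue_flip_ne a) // -ebx.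
  by case: B => /=; nia.
move=> _; rewrite !cvalue_flip_ne //.
by move: (IH uts); case: (partner d x ts) => [y|]; lia.
Qed.

End Flip.

Arguments side_value_flip {c inp} ltk {ts}.

Lemma uniq_cross_vars j l b : j != l -> uniq (side_vars (cross_side d j l b)).
Proof.
move=> nejl; rewrite /side_vars /cross_side.
by case: b; rewrite /= !inE !xpair_eqE /= ?[l == j]eq_sym ?(negbTE nejl).
Qed.

Lemma side_value_le inp ts : side_value inp ts <= size ts * ((2 ^ n).-1 * (2 ^ n).-1).
Proof.
have le_cvalue x : cvalue inp x <= (2 ^ n).-1 by rewrite -ltnS prednK ?expn_gt0 ?cvalue_lt.
elim: ts => [|t ts IH]; first by rewrite /side_value big_nil.
by rewrite /side_value big_cons mulSn leq_add // leq_mul.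
Qed.

Lemma side_value_lt inp j l b : side_value inp (cross_side d j l b) < 2 ^ (3 * n).
Proof.
apply: leq_ltn_trans (side_value_le _ _) _.
rewrite [3 * n]mulnC expnM (_ : size _ = 3); last by case: b.
by case: (2 ^ n) (expn_gt0 2 n) => // a _; rewrite /= !expnS expn0; nia.
Qed.

Lemma cross_sides_eq inp j l :
  (side_value inp (cross_side d j l true) == side_value inp (cross_side d j l false)) =
  (cross_term (points d n inp) j l == cross_term (points d n inp) l j).
Proof.
rewrite /cross_term -(@eqr_nat rat) -subr_eq0 -[in RHS]subr_eq0; congr (_ == _).
rewrite /side_value /cross_side !big_cons !big_nil /points /cvalue /=.
by rewrite !natrD !natrM; ring.
Qed.

Definition stores_sides (st : state d (K d)) :=
  forall j l b (h : 'I_3) p, j != l -> p < n ->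
    st_aux _ _ st (rid d (Some (j, l, b, h))) [:: p]
    = bitn (side_value (st_inp _ _ st) (cross_side d j l b)) (h * n + p).

Lemma stores_sides_init : stores_sides (init_state d (K d)).
Proof.
move=> j l b h p _ _ /=.
by rewrite /side_value big1 ?bitn0 // => t _; rewrite /cvalue /Defs.coord big1.
Qed.

Section Step.
Variables (st : state d (K d)) (c : change d).
Hypotheses (stored : stores_sides st) (ltk : c.2 < n).
Local Notation inp := (st_inp _ _ st).
Local Notation inp' := (flip d c inp).
Local Notation sat := (holds _ n (interp d (K d) st)).
Local Notation defines_here := (defines _ n 3 c.2 (interp d (K d) st)).

Lemma defines_stored j l b : j != l ->
  defines_here (FStored d j l b) (side_value inp (cross_side d j l b)).
Proof. by move=> nejl h v s env _ ltv; rewrite /= stored. Qed.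

Lemma defines_shift_cvalue y : defines_here (FShift (inl y)) (cvalue inp y * 2 ^ c.2).
Proof.
by apply: defines_shift => // [|a lta]; [exact: cvalue_lt|rewrite /= bitn_cvalue].
Qed.

Lemma defines_new_side j l b : j != l ->
  defines_here (FNewSide d (c.1.1, c.1.2) j l b) (side_value inp' (cross_side d j l b)).
Proof.
move=> nejl; have := side_value_flip (inp := inp) ltk (uniq_cross_vars j l b nejl).
rewrite /FNewSide; case: (partner _ _ _) => [y|->]; last exact: defines_stored.
have defS := defines_stored j l b nejl; have defY := defines_shift_cvalue y.
move=> E h v s env es ltv; rewrite holds_if [sat _ (FRel _ _)]/= es.
case: (inp c.1.1 c.1.2 c.2) E; rewrite ?mul1n ?mul0n => E.
  have leYS : cvalue inp y * 2 ^ c.2 <= side_value inp (cross_side d j l b) by lia.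
  by rewrite (defines_sub (side_value_lt _ _ _ _) leYS defS defY) //; congr bitn; lia.
by rewrite (defines_sum defS defY) //; congr bitn; lia.
Qed.

Lemma stores_sides_step : stores_sides (step d (collinearity_program d) n st c).
Proof.
move=> j l b h p nejl ltp.
rewrite /= /update /arity enum_rankK /= ltp.
exact: (defines_new_side j l b nejl h 1 0 (fun v => nth 0 [:: c.2; p] v)).
Qed.

Lemma holds_sides_eq {j l} : j != l ->
  sat (fun v => nth 0 [:: c.2] v) (FSidesEq d (c.1.1, c.1.2) j l) =
  (side_value inp' (cross_side d j l true) == side_value inp' (cross_side d j l false)).
Proof.
move=> nejl; have new_side := fun b h (p : 'I_n) =>
  defines_new_side j l b nejl h 0 1 (env_cons p (fun v => nth 0 [:: c.2] v)) erefl (ltn_ord p).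
rewrite holds_all; apply/forallP/eqP => [eq_bits|eq_sides p].
  apply: (bitn_inj (3 * n)); [exact: side_value_lt|exact: side_value_lt|].
  move=> P ltP; have [h [p ->]] := block_posP ltP.
  have := eq_bits p; rewrite holds_AndL_enum => /forallP/(_ h).
  by rewrite holds_iff !new_side => /eqP.
by rewrite holds_AndL_enum; apply/forallP => h; rewrite holds_iff !new_side eq_sides.
Qed.

Lemma query_step :
  query_answer d (collinearity_program d) (step d (collinearity_program d) n st c) <->
  collinear d (points d n inp').
Proof.
rewrite collinear_cross /query_answer /= /update /arity enum_rankK /= /FQuery.
case: eqP => [d0|/eqP d_neq0]; first by split => [|[d_gt0]] //; rewrite d0 in d_gt0.
rewrite lt0n d_neq0 holds_AndL_enum; split => [/forallP sides_eq|[_ cross]].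
  split => // j l; have [<-|nejl] := eqVneq j l; first by [].
  have := sides_eq (j, l); rewrite /= (negbTE nejl) (holds_sides_eq nejl).
  by rewrite cross_sides_eq => /eqP.
apply/forallP => -[j l] /=; case: eqP => // /eqP nejl.
by rewrite (holds_sides_eq nejl) // cross_sides_eq /= cross.
Qed.

End Step.

Lemma stores_sides_run st cs : stores_sides st -> all (fun c : change d => c.2 < n) cs ->
  stores_sides (foldl (step d (collinearity_program d) n) st cs).
Proof.
elim: cs st => [//|c cs IH] st stored /= /andP[ltk ltcs].
by apply: IH => //; apply: stores_sides_step.
Qed.

End Correctness.

Theorem lemma14 : forall d : nat, exists P : dynprog d, maintains_collinearity d P.
Proof.
move=> d; exists (collinearity_program d) => n cs nonempty.
case/lastP: cs nonempty => [//|cs c] _; rewrite all_rcons => /andP[ltk ltcs].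
rewrite /run foldl_rcons; apply: query_step => //.
by apply: stores_sides_run => //; apply: stores_sides_init.
Qed.
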